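(* Let $S(T)\in\mathbb C[T]$ be a polynomial with constant term $1$, and let $P(T)=1+a_1T+a_2T^2+\cdots$ be its multiplicative inverse in the formal power series ring $\mathbb C[[T]]$. If there exists an integer $r>0$ such that $a_{mr}=0$ for all integers $m\ge1$, then $S(T)=1$. *)

From HB Require Import structures.
From mathcomp Require Import all_boot all_order all_algebra.
Set Implicit Arguments. Unset Strict Implicit. Unset Printing Implicit Defensive.
Import Order.TTheory GRing.Theory Num.Theory.
Local Open Scope ring_scope.

Definition is_fps_inverse (R : nzRingType) (S : {poly R}) (a : nat -> R) : Prop :=
  forall n : nat, \sum_(i < n.+1) S`_i * a (n - i)%N = (n == 0%N)%:R.

From HB Require Import structures.
From mathcomp Require Import all_boot all_order all_algebra.
Import Order.TTheory GRing.Theory Num.Theory.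
Local Open Scope ring_scope.

(* Write S = c * prod (T - z) over its roots and let W(T) := prod (T^r - z^r),
   a monic polynomial in T^r of degree N = r * deg S which S divides, say
   W = U * S with deg U < N.  Multiplying by the inverse series P of S, the
   coefficient of T^N in W * P is that of U, i.e. 0.  But W only has terms
   in degrees divisible by r and P vanishes in the positive multiples of r,
   so that coefficient is the product of the leading coefficient of W and
   of a_0 = 1.  Hence S must be constant. *)

Lemma dvdp_prod_XsubC_comp_Xn (R : idomainType) (rs : seq R) (n : nat) :
  \prod_(z <- rs) ('X - z%:P) %| (\prod_(z <- rs) ('X - (z ^+ n)%:P)) \Po 'X^n.
Proof.
elim: rs => [|z rs IHrs]; first by rewrite !big_nil dvd1p.
rewrite !big_cons comp_polyM dvdp_mul // dvdp_XsubCl /root.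
by rewrite comp_polyB comp_polyX comp_polyC !hornerE subrr.
Qed.

Lemma exists_monic_dvdp_comp_Xn {F : closedFieldType} {S : {poly F}} (n : nat) :
  S != 0 -> exists q : {poly F}, [/\ q \is monic, size q = size S & S %| q \Po 'X^n].
Proof.
move=> S_neq0; have [rs ->] := closed_field_poly_normal S.
exists (\prod_(z <- rs) ('X - (z ^+ n)%:P)); split.
- exact: monic_prod_XsubC.
- by rewrite size_scale ?size_prod_XsubC // lead_coef_eq0.
- by rewrite dvdpZl ?lead_coef_eq0 ?dvdp_prod_XsubC_comp_Xn.
Qed.

Lemma fps_inverse_mulK {R : nzRingType} {S : {poly R}} (U : {poly R}) {a : nat -> R} (n : nat) :
  is_fps_inverse S a -> \sum_(i < n.+1) (U * S)`_i * a (n - i)%N = U`_n.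
Proof.
move=> Sinv; pose A := \poly_(i < n.+1) a i.
have SA k : (k <= n)%N -> (S * A)`_k = (k == 0%N)%:R.
  move=> le_kn; rewrite coefM -Sinv; apply: eq_bigr => i _.
  by rewrite coef_poly ltnS (leq_trans (leq_subr _ _) le_kn).
transitivity (U * S * A)`_n.
  rewrite coefM; apply: eq_bigr => i _.
  by rewrite coef_poly ltnS leq_subr.
rewrite -mulrA coefM big_ord_recr /= subnn SA // mulr1 big1 ?add0r // => i _.
by rewrite SA ?leq_subr // subn_eq0 leqNgt ltn_ord mulr0.
Qed.

Lemma sum_comp_Xn_lacunary (R : nzSemiRingType) (q : {poly R}) (a : nat -> R) (r m : nat) :
  (0 < r)%N -> (forall k : nat, (1 <= k)%N -> a (k * r)%N = 0) ->
  \sum_(i < (m * r).+1) (q \Po 'X^r)`_i * a (m * r - i)%N = q`_m * a 0%N.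
Proof.
move=> r_gt0 a_kr.
rewrite big_ord_recr /= subnn coef_comp_poly_Xn // dvdn_mull // mulnK //.
rewrite big1 ?add0r // => i _; rewrite coef_comp_poly_Xn //.
case: dvdnP => [[k i_eq]|]; last by rewrite mul0r.
have := ltn_ord i; rewrite i_eq ltn_mul2r r_gt0 => lt_km.
by rewrite -mulnBl a_kr ?mulr0 // subn_gt0.
Qed.

Lemma coef_mul_size_le {R : idomainType} {U S : {poly R}} {N : nat} :
  (1 < size S)%N -> (size (U * S)%R <= N.+1)%N -> U`_N = 0.
Proof.
have [-> _ _|U_neq0 size_S] := eqVneq U 0; first by rewrite coef0.
have S_neq0 : S != 0 by rewrite -size_poly_gt0 (ltn_trans _ size_S).
rewrite size_mul // => size_US; apply: nth_default.
move: size_S size_US; case: (size S) => [|[|k]] // _.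
by rewrite !addnS ltnS => /(leq_trans (leq_addr _ _)).
Qed.

Theorem theorem4p13 (C : numClosedFieldType) (S : {poly C}) (a : nat -> C) :
  S`_0 = 1 ->
  is_fps_inverse S a ->
  (exists r : nat, (0 < r)%N /\ (forall m : nat, (1 <= m)%N -> a (m * r)%N = 0)) ->
  S = 1.
Proof.
move=> S0 Sinv [r [r_gt0 a_mr]].
have a0 : a 0%N = 1 by have := Sinv 0%N; rewrite big_ord1 S0 mul1r.
have S_neq0 : S != 0 by apply: contra_eq_neq S0 => ->; rewrite coef0 eq_sym oner_neq0.
have [size_S|size_S] := leqP (size S) 1; first by rewrite (size1_polyC size_S) S0.
have [q [q_monic size_q S_dvd]] := exists_monic_dvdp_comp_Xn r S_neq0.
set N := ((size S).-1 * r)%N.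
have size_W : (size (q \Po 'X^r) <= N.+1)%N.
  by apply: leq_trans (size_comp_poly_leq _ _) _; rewrite size_polyXn size_q.
have := fps_inverse_mulK ((q \Po 'X^r) %/ S) N Sinv.
rewrite divpK // sum_comp_Xn_lacunary // a0 mulr1 -size_q.
rewrite -lead_coefE (monicP q_monic) (coef_mul_size_le size_S) ?divpK ?size_q //.
by move/eqP; rewrite oner_eq0.
Qed.
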